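(* Let $v_1,\dots,v_M>0$, $\lambda_1,\dots,\lambda_M>0$, $\bar x\in[0,\sum_m\lambda_m]$, $\lambda_B\theta_B>0$, $\theta_I>0$, $\bar\rho_1,\dots,\bar\rho_M\in[0,1]$, and define the affine functions $\phi_m(\bm c)=\sum_{i=1}^M c_iv_i+\lambda_B\theta_Bv_m+\bar\rho_mc_m\theta_Iv_m$ (positive on the feasible set). Consider $$\max_{\bm c,\bm\beta}\ \sum_{m=1}^M\beta_m\ \text{ s.t. }\ c_mv_m-\beta_m\phi_m(\bm c)\ge0\ \forall m,\quad \sum_{i=1}^M c_i=\bar x,\quad 0\le c_m\le\lambda_m\ \forall m. \tag{$*$}$$ If $(\bm c^*,\bm\beta^* )$ satisfies the KKT conditions of $( * )$, then there exists $\bm u^*=(u_1^*,\dots,u_M^* )$ such that $u_m^*=1/\phi_m(\bm c^* )$ and $c_m^*v_m-\beta_m^*\phi_m(\bm c^* )=0$ for all $m$, and $\bm c^*$ is an optimal solution of the linear program $$\max_{\bm c}\ \sum_{m=1}^M u_m^*\big(c_mv_m-\beta_m^*\phi_m(\bm c)\big)\ \text{ s.t. }\ \sum_{i=1}^M c_i=\bar x,\quad 0\le c_m\le\lambda_m\ \forall m.$$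
   Context: Problem $( * )$ is the epigraph reformulation of the sum-of-ratios problem $\max\sum_m c_mv_m/\phi_m(\bm c)$ over the same constraints, arising from the asymptotic ($R\to\infty$) offloading problem, where $v_m=B_m^{2/\alpha}$ with trust biases $B_m$, $\bar\rho_m$ is an upper bound on the active ratio of group $m$, and $\bar x$ is the fixed total caching density. *)

(* the statement is purely algebraic/order-theoretic, so it is
   stated over an arbitrary real field R (this includes the reals). *)
From HB Require Import structures.
From mathcomp Require Import all_boot all_order all_algebra.
Set Implicit Arguments. Unset Strict Implicit. Unset Printing Implicit Defensive.
Import Order.TTheory GRing.Theory Num.Theory.
Local Open Scope ring_scope.

Section Defs.
Variables (R : realFieldType) (M : nat).
Variables (v lam rho : 'I_M -> R) (xbar lamB thetaB thetaI : R).

Definition phi (c : 'I_M -> R) (m : 'I_M) : R :=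
  \sum_(i < M) c i * v i + lamB * thetaB * v m + rho m * c m * thetaI * v m.

Definition gcon (c beta : 'I_M -> R) (m : 'I_M) : R :=
  c m * v m - beta m * phi c m.

(* partial derivative d g_k / d c_j (g_k is affine in c for fixed beta) *)
Definition dgcon_dc (beta : 'I_M -> R) (k j : 'I_M) : R :=
  (if k == j then v k else 0)
  - beta k * (v j + (if k == j then rho k * thetaI * v k else 0)).

Definition feas_c (c : 'I_M -> R) : Prop :=
  \sum_(i < M) c i = xbar /\ (forall m, 0 <= c m /\ c m <= lam m).

(* KKT conditions of problem problem P:
     max sum_m beta_m  s.t.  g_m(c,beta) >= 0, sum_i c_i = xbar,
                              c_m >= 0, lam_m - c_m >= 0.
   Lagrangian  L = sum_m beta_m + sum_m u_m g_m + nu (sum_i c_i - xbar)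
                   + sum_m mu_m c_m + sum_m eta_m (lam_m - c_m). *)
Definition KKT (c beta : 'I_M -> R) : Prop :=
  exists (u mu eta : 'I_M -> R) (nu : R),
    (forall m, 0 <= gcon c beta m) /\ feas_c c /\
    (forall m, 0 <= u m /\ 0 <= mu m /\ 0 <= eta m) /\
    (* stationarity w.r.t. beta_m *)
    (forall m, 1 - u m * phi c m = 0) /\
    (* stationarity w.r.t. c_j *)
    (forall j, \sum_(k < M) u k * dgcon_dc beta k j + nu + mu j - eta j = 0) /\
    (forall m, u m * gcon c beta m = 0 /\ mu m * c m = 0 /\
               eta m * (lam m - c m) = 0).

Definition lp_obj (u beta c : 'I_M -> R) : R :=
  \sum_(m < M) u m * gcon c beta m.

End Defs.

From HB Require Import structures.
From mathcomp Require Import all_boot all_order all_algebra.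
From mathcomp Require Import ring lra.
Import Order.TTheory GRing.Theory Num.Theory.
Local Open Scope ring_scope.

(* Let (cs, bs) satisfy the KKT conditions of (P) with
   multipliers u (ratio constraints), nu (budget), mu, eta (box bounds).
   1. Stationarity in beta_m reads u_m phi_m(cs) = 1, hence u_m = 1/phi_m(cs)
      and in particular u_m <> 0; complementary slackness u_m g_m = 0 then
      forces every ratio constraint to be active: g_m(cs, bs) = 0.
   2. For fixed bs, each g_m is affine in c with gradient dgcon_dc, so the
      LP objective sum_m u_m g_m(c, bs) is affine in c and its increment
      from cs is sum_j d_j (c_j - cs_j), d_j = sum_k u_k dgcon_dc k j.
   3. Stationarity in c says d_j = eta_j - mu_j - nu: these are exactly KKT
      multipliers of the LP at cs.  A general sufficiency lemma for linear
      objectives over {sum c = const, 0 <= c <= lam} then shows that the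
      increment is <= 0, i.e. cs solves the LP. *)

Lemma box_budget_kkt_optimal (R : realFieldType) (I : finType)
    (lam d mu eta c cs : I -> R) (nu : R) :
  (forall j, d j = eta j - mu j - nu) ->
  (forall j, 0 <= mu j /\ 0 <= eta j) ->
  (forall j, mu j * cs j = 0 /\ eta j * (lam j - cs j) = 0) ->
  \sum_j c j = \sum_j cs j ->
  (forall j, 0 <= c j /\ c j <= lam j) ->
  \sum_j d j * (c j - cs j) <= 0.
Proof.
move=> hd hpos hslack hbudget hbox.
(* Using slackness, each term is a nonpositive part minus nu (c_j - cs_j). *)
have split_term j : d j * (c j - cs j)
    = (eta j * (c j - lam j) - mu j * c j) - nu * (c j - cs j).
  by rewrite hd; case: (hslack j) => h1 h2; move: h1 h2; nra.
under eq_bigr => j _ do rewrite split_term.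
have budget_zero : \sum_j (c j - cs j) = 0 by rewrite sumrB hbudget subrr.
rewrite sumrB -mulr_sumr budget_zero mulr0 subr0.
apply: sumr_le0 => j _.
by case: (hpos j) => hmu heta; case: (hbox j) => hc0 hc1; nra.
Qed.

Lemma sum_delta (R : pzSemiRingType) (I : finType) (m : I) (a : R) (f : I -> R) :
  \sum_j (if m == j then a else 0) * f j = a * f m.
Proof.
rewrite (bigD1 m) //= eqxx big1 ?addr0 // => j /negbTE hj.
by rewrite eq_sym hj mul0r.
Qed.

Section RatioConstraints.
Variables (R : realFieldType) (M : nat).
Variables (v rho : 'I_M -> R) (lamB thetaB thetaI : R).

Local Notation g := (gcon v rho lamB thetaB thetaI).
Local Notation dg := (dgcon_dc v rho thetaI).

Lemma gcon_increment (beta c cs : 'I_M -> R) (m : 'I_M) :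
  g c beta m - g cs beta m = \sum_j dg beta m j * (c j - cs j).
Proof.
rewrite /gcon /phi /dgcon_dc.
have -> : \sum_(j < M) ((if m == j then v m else 0)
      - beta m * (v j + (if m == j then rho m * thetaI * v m else 0)))
      * (c j - cs j)
    = \sum_(j < M) (if m == j then v m else 0) * (c j - cs j)
      - beta m * \sum_(j < M) v j * (c j - cs j)
      - beta m * \sum_(j < M) (if m == j then rho m * thetaI * v m else 0)
                              * (c j - cs j).
  by rewrite !mulr_sumr -!sumrB; apply: eq_bigr => j _; ring.
rewrite !sum_delta.
have -> : \sum_(j < M) v j * (c j - cs j)
    = \sum_(i < M) c i * v i - \sum_(i < M) cs i * v i.
  by rewrite -sumrB; apply: eq_bigr => j _; ring.
ring.
Qed.

Lemma lp_obj_increment (u beta c cs : 'I_M -> R) :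
  lp_obj v rho lamB thetaB thetaI u beta c
    - lp_obj v rho lamB thetaB thetaI u beta cs
  = \sum_j (\sum_k u k * dg beta k j) * (c j - cs j).
Proof.
rewrite /lp_obj -sumrB.
under eq_bigr => k _ do rewrite -mulrBr gcon_increment mulr_sumr.
rewrite exchange_big /=; apply: eq_bigr => j _.
by rewrite mulr_suml; apply: eq_bigr => k _; rewrite mulrA.
Qed.

End RatioConstraints.

Lemma inverse_multiplier (R : fieldType) (u p : R) :
  u * p = 1 -> u = 1 / p /\ u != 0.
Proof.
move=> hup.
have hp : p != 0.
  by apply: contra_eq_neq hup => ->; rewrite mulr0 eq_sym oner_neq0.
split; first by rewrite -hup mulfK.
by apply: contra_eq_neq hup => ->; rewrite mul0r eq_sym oner_neq0.
Qed.

Theorem proposition4 (R : realFieldType) (M : nat)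
    (v lam rho : 'I_M -> R) (xbar lamB thetaB thetaI : R)
    (hv : forall m, 0 < v m) (hlam : forall m, 0 < lam m)
    (hx0 : 0 <= xbar) (hx1 : xbar <= \sum_(m < M) lam m)
    (hB : 0 < lamB * thetaB) (hI : 0 < thetaI)
    (hrho : forall m, 0 <= rho m <= 1)
    (cs bs : 'I_M -> R)
    (hKKT : KKT v lam rho xbar lamB thetaB thetaI cs bs) :
  exists us : 'I_M -> R,
    (forall m, us m = 1 / phi v rho lamB thetaB thetaI cs m) /\
    (forall m, gcon v rho lamB thetaB thetaI cs bs m = 0) /\
    feas_c lam xbar cs /\
    (forall c, feas_c lam xbar c ->
       lp_obj v rho lamB thetaB thetaI us bs c
       <= lp_obj v rho lamB thetaB thetaI us bs cs).
Proof.
case: hKKT => u [mu [eta [nu [_ [hfeas [hdual [hbeta [hc hslack]]]]]]]].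
have hu m : u m = 1 / phi v rho lamB thetaB thetaI cs m /\ u m != 0.
  by apply: inverse_multiplier; move: (hbeta m); lra.
exists u; split; [|split; [|split]] => //.
- by move=> m; case: (hu m).
- move=> m; case: (hslack m) => /eqP + _.
  by rewrite mulf_eq0 (negbTE (hu m).2) => /eqP.
- move=> c [hsum hbox]; rewrite -subr_le0 lp_obj_increment.
  apply: (@box_budget_kkt_optimal R _ lam _ mu eta c cs nu) => //.
  + by move=> j; move: (hc j); lra.
  + by move=> j; case: (hdual j) => _.
  + by move=> j; case: (hslack j) => _.
  + by rewrite hsum; case: hfeas.
Qed.
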